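(* Every $\Rsh$-closed $\Rsh$-distributive subclass of a finite multi-algebra is dissociable.
   Context: A finite non-associative algebra is a tuple $(\mathcal A,\cup,\neg,\emptyset,\mathcal B,\diamond,\overline{\cdot},e)$ where $(\mathcal A,\cup,\neg,\emptyset,\mathcal B)$ is a finite Boolean algebra (with $x\cap y=\neg(\neg x\cup\neg y)$) and for all $x,y,z$: $\overline{\overline x}=x$, $\overline{x\cup y}=\overline x\cup\overline y$, $\overline{x\diamond y}=\overline y\diamond\overline x$, $e\diamond x=x\diamond e=x$, $x\diamond(y\cup z)=(x\diamond y)\cup(x\diamond z)$, $(x\diamond y)\cap\overline z=\emptyset\iff(y\diamond z)\cap\overline x=\emptyset$. $r\subseteq r'$ means $r\cup r'=r'$. A projection operator from $\mathcal A$ to $\mathcal A'$ is a map $\Rsh$ with $\Rsh(r\cup r')=\Rsh r\cup\Rsh r'$ and $\Rsh\overline r=\overline{\Rsh r}$. A finite multi-algebra is a product $\mathcal A_1\times\cdots\times\mathcal A_m$ of finite non-associative algebras with projection operators $\Rsh_i^j:\mathcal A_i\to\mathcal A_j$ for all distinct $i,j$; $\subseteq,\diamond,\cap,\overline{\cdot}$ componentwise on relations $R=(R_1,\dots,R_m)$. $R$ is closed under projection if $R_j\subseteq\Rsh_i^jR_i$ for all distinct $i,j$; the projection closure $\Rsh R$: repeatedly replace $R_j$ by $R_j\cap\Rsh_i^jR_i$ until a fixed point. A network over $\mathcal S$ is a finite set $E$ of variables with $N^{xy}\in\mathcal S$ for all distinct $x,y$, $N^{yx}=\overline{N^{xy}}$;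 $N_i^{xy}=(N^{xy})_i$. It is trivially inconsistent if some $N_i^{xy}=\emptyset$; closed under composition if $N^{xz}\subseteq N^{xy}\diamond N^{yz}$ for all distinct $x,y,z$; closed under projection if all $N^{xy}$ are; algebraically consistent if closed under both and not trivially inconsistent. $N$ is dissociable if replacing each $N^{xy}$ by $\Rsh N^{xy}$ and then closing under composition (repeating $N^{xz}\leftarrow N^{xz}\cap(N^{xy}\diamond N^{yz})$ to a fixed point) yields a network that is algebraically consistent or trivially inconsistent; a subset is dissociable if every network over it is. A subclass is a subset closed under $\diamond$, $\cap$ and converse; slices $\mathcal S_i=\{R_i:R\in\mathcal S\}$; $\mathcal S$ is $\Rsh$-closed if $\Rsh R\in\mathcal S$ for all $R\in\mathcal S$. $\mathcal S$ is $\Rsh$-distributive if for all distinct $i,j$: for all $r,r'\in\mathcal S_i$ with $r\diamond r'\neq\emptyset$, $(\Rsh_i^jr)\diamond(\Rsh_i^jr')\subseteq\Rsh_i^j(r\diamond r')$; and for all $r,r'\in\mathcal S_i$ with $r\cap r'\neq\emptyset$, $(\Rsh_i^jr)\cap(\Rsh_i^jr')\subseteq\Rsh_i^j(r\cap r')$. *)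

From HB Require Import structures.
From mathcomp Require Import all_boot all_order.
Set Implicit Arguments. Unset Strict Implicit. Unset Printing Implicit Defensive.
Import Order.Theory.
Local Open Scope order_scope.

(* The finite Boolean algebra (A, cup, neg, empty, B) is a MathComp    *)
(* finite complemented distributive lattice with top and bottom        *)
(* (finCTBDistrLatticeType): cup = join, neg = compl, empty = \bot,    *)
(* B = \top.  Intersection is defined as in the paper, via cup/neg.    *)

Record nalg := NAlg {
  nalg_disp : Order.disp_t;
  nalg_car : finCTBDistrLatticeType nalg_disp;
  nalg_comp : nalg_car -> nalg_car -> nalg_car;
  nalg_conv : nalg_car -> nalg_car;
  nalg_e : nalg_car;
  nalg_convK : forall x, nalg_conv (nalg_conv x) = x;
  nalg_convU : forall x y, nalg_conv (x `|` y) = nalg_conv x `|` nalg_conv y;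
  nalg_convM : forall x y,
      nalg_conv (nalg_comp x y) = nalg_comp (nalg_conv y) (nalg_conv x);
  nalg_e_left : forall x, nalg_comp nalg_e x = x;
  nalg_e_right : forall x, nalg_comp x nalg_e = x;
  nalg_compU : forall x y z,
      nalg_comp x (y `|` z) = nalg_comp x y `|` nalg_comp x z;
  nalg_cycle : forall x y z,
      (~` (~` (nalg_comp x y) `|` ~` (nalg_conv z)) = \bot)
      <-> (~` (~` (nalg_comp y z) `|` ~` (nalg_conv x)) = \bot)
}.

Definition cupA (A : nalg) (x y : nalg_car A) : nalg_car A := x `|` y.
Definition negA (A : nalg) (x : nalg_car A) : nalg_car A := ~` x.
Definition emptyA (A : nalg) : nalg_car A := \bot.
Definition capA (A : nalg) (x y : nalg_car A) : nalg_car A :=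
  negA (cupA (negA x) (negA y)).
Definition subA (A : nalg) (x y : nalg_car A) : Prop := cupA x y = y.

(* Finite multi-algebras: m algebras A_0..A_{m-1} with projection      *)
(* operators Rsh_i^j : A_i -> A_j for all distinct i, j.               *)
(* (Rsh_i^i is also a field, but no property of it is assumed and it   *)
(* is never used.)                                                     *)

Unset Implicit Arguments.
Record multialg := MultiAlg {
  ma_m : nat;
  ma_alg : 'I_ma_m -> nalg;
  ma_proj : forall i j : 'I_ma_m, nalg_car (ma_alg i) -> nalg_car (ma_alg j);
  ma_projU : forall (i j : 'I_ma_m), i != j ->
    forall r r' : nalg_car (ma_alg i),
      ma_proj i j (cupA r r') = cupA (ma_proj i j r) (ma_proj i j r');
  ma_projC : forall (i j : 'I_ma_m), i != j ->
    forall r : nalg_car (ma_alg i),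
      ma_proj i j (nalg_conv r) = nalg_conv (ma_proj i j r)
}.

Set Implicit Arguments.
Arguments ma_proj M i j _ : rename.

Section MultiAlgDefs.
Variable M : multialg.
Local Notation m := (ma_m M).
Local Notation A := (ma_alg M).
Local Notation P := (ma_proj M).

Definition mrel := forall i : 'I_m, nalg_car (A i).

Definition subR (R R' : mrel) : Prop := forall i, subA (R i) (R' i).
Definition compR (R R' : mrel) : mrel := fun i => nalg_comp (R i) (R' i).
Definition capR (R R' : mrel) : mrel := fun i => capA (R i) (R' i).
Definition convR (R : mrel) : mrel := fun i => nalg_conv (R i).

Definition proj_closed (R : mrel) : Prop :=
  forall i j : 'I_m, i != j -> subA (R j) (P i j (R i)).

Definition proj_step (i j : 'I_m) (R : mrel) : mrel :=
  fun k => if k == j then capA (R k) (P i k (R i)) else R k.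

Definition proj_round (R : mrel) : mrel :=
  foldl (fun R' (ij : 'I_m * 'I_m) =>
           if ij.1 != ij.2 then proj_step ij.1 ij.2 R' else R')
        R (enum [set: ('I_m * 'I_m)%type]).

Definition ma_size : nat := \sum_(i < m) #|nalg_car (A i)|.

(* projection closure: repeat the replacement steps until a fixed point;
   ma_size.+1 sweeps always suffice to reach it *)
Definition proj_closure (R : mrel) : mrel := iter ma_size.+1 proj_round R.

(* N x y is only meaningful for x != y.                                *)

Definition network_over (V : finType) (S : mrel -> Prop) (N : V -> V -> mrel) :=
  (forall x y, x != y -> S (N x y)) /\
  (forall x y, x != y -> forall i, N y x i = nalg_conv (N x y i)).

Definition triv_incons (V : finType) (N : V -> V -> mrel) : Prop :=
  exists x y, x != y /\ exists i, N x y i = emptyA (A i).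

Definition comp_closed (V : finType) (N : V -> V -> mrel) : Prop :=
  forall x y z, x != y -> y != z -> x != z ->
    subR (N x z) (compR (N x y) (N y z)).

Definition net_proj_closed (V : finType) (N : V -> V -> mrel) : Prop :=
  forall x y, x != y -> proj_closed (N x y).

Definition alg_consistent (V : finType) (N : V -> V -> mrel) : Prop :=
  comp_closed N /\ net_proj_closed N /\ ~ triv_incons N.

(* one composition step on the triple (x, y, z):
   N^{xz} <- N^{xz} cap (N^{xy} diamond N^{yz}), and N^{zx} is updated to
   the converse of the new N^{xz} so that the result is again a network *)
Definition comp_step (V : finType) (x y z : V) (N : V -> V -> mrel)
  : V -> V -> mrel :=
  let nxz := capR (N x z) (compR (N x y) (N y z)) in
  fun u v => if (u == x) && (v == z) then nxz
             else if (u == z) && (v == x) then convR nxz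
             else N u v.

Definition comp_round (V : finType) (N : V -> V -> mrel) : V -> V -> mrel :=
  foldl (fun N' (t : V * V * V) =>
           let: (x, y, z) := t in
           if [&& x != y, y != z & x != z] then comp_step x y z N' else N')
        N (enum [set: (V * V * V)%type]).

(* composition closure: repeat the steps until a fixed point;
   (#|V|^2 * ma_size).+1 sweeps always suffice to reach it *)
Definition comp_closure (V : finType) (N : V -> V -> mrel) : V -> V -> mrel :=
  iter ((#|V| * #|V| * ma_size).+1) (@comp_round V) N.

Definition net_dissociable (V : finType) (N : V -> V -> mrel) : Prop :=
  let N' := comp_closure (fun x y => proj_closure (N x y)) in
  alg_consistent N' \/ triv_incons N'.

Definition dissociable (S : mrel -> Prop) : Prop :=
  forall (V : finType) (N : V -> V -> mrel), network_over S N -> net_dissociable N.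

Definition subclass (S : mrel -> Prop) : Prop :=
  (forall R R', S R -> S R' -> S (compR R R')) /\
  (forall R R', S R -> S R' -> S (capR R R')) /\
  (forall R, S R -> S (convR R)).

Definition slice (S : mrel -> Prop) (i : 'I_m) (r : nalg_car (A i)) : Prop :=
  exists R, S R /\ R i = r.

Definition Rsh_closed (S : mrel -> Prop) : Prop :=
  forall R, S R -> S (proj_closure R).

Definition Rsh_distributive (S : mrel -> Prop) : Prop :=
  forall i j : 'I_m, i != j ->
    (forall r r', slice S r -> slice S r' ->
       nalg_comp r r' <> emptyA (A i) ->
       subA (nalg_comp (P i j r) (P i j r')) (P i j (nalg_comp r r'))) /\
    (forall r r', slice S r -> slice S r' ->
       capA r r' <> emptyA (A i) ->
       subA (capA (P i j r) (P i j r')) (P i j (capA r r'))).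

End MultiAlgDefs.

From mathcomp Require Import all_boot all_order.
From Stdlib Require Import Classical FunctionalExtensionality.
Set Implicit Arguments. Unset Strict Implicit. Unset Printing Implicit Defensive.
Import Order.Theory.
Local Open Scope order_scope.

(* By Rsh-distributivity, intersections and compositions of projection-closed
   relations of S are again projection-closed as long as no component is
   empty.  So after the initial projection closure (which stays in S and
   commutes with converse), every composition step
   N^xz <- N^xz cap (N^xy diamond N^yz) keeps the network over S and
   projection-closed, unless it creates an empty component, after which the
   network stays trivially inconsistent.  Both closures iterate deflationary
   rounds; counting the elements below each component gives a measure that
   strictly decreases until a round is stable, so the prescribed number of
   rounds reaches a network at which every single step is stable, i.e. which
   is closed. *)

Section DeflationaryIteration.
Variables (T : Type) (le : T -> T -> Prop) (mu : T -> nat) (Inv : T -> Prop).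
Hypothesis le_refl : forall x, le x x.
Hypothesis le_trans : forall x y z, le x y -> le y z -> le x z.
Hypothesis mu_mono : forall x y, le x y -> (mu x <= mu y)%N.
Hypothesis mu_inj : forall x y, le x y -> (mu y <= mu x)%N -> x = y.

Definition deflationary (f : T -> T) := forall x, Inv x -> Inv (f x) /\ le (f x) x.

Lemma foldl_deflationary (X : Type) (F : T -> X -> T) (s : seq X) :
  (forall t, deflationary (F^~ t)) -> deflationary (fun x => foldl F x s).
Proof.
move=> defF; elim: s => [|t s IHs] x Ix //=.
have [Ix' le_x'] := defF t x Ix; have [Iy le_y] := IHs _ Ix'.
by split; last exact: le_trans le_y le_x'.
Qed.

Lemma foldl_fixed_step (X : eqType) (F : T -> X -> T) (s : seq X) x :
  (forall t, deflationary (F^~ t)) -> Inv x -> foldl F x s = x ->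
  forall t, t \in s -> F x t = x.
Proof.
move=> defF; elim: s x => [|t0 s IHs] x Ix //= fixx.
have [Ix' le_x'] := defF t0 x Ix.
have [_ le_y] := foldl_deflationary s defF Ix'; rewrite fixx in le_y.
have Fx : F x t0 = x by apply: mu_inj le_x' (mu_mono le_y).
rewrite Fx in fixx => t; rewrite inE => /predU1P[-> //|]; exact: IHs.
Qed.

Lemma iter_deflationary_fixed (f : T -> T) n x :
  deflationary f -> Inv x -> (mu x <= n)%N ->
  Inv (iter n f x) /\ f (iter n f x) = iter n f x.
Proof.
move=> deff; have shrink y : Inv y -> f y = y \/ (mu (f y) < mu y)%N.
  move=> /deff[_ le_fy]; case: leqP => [mu_le|]; last by right.
  by left; apply: mu_inj le_fy mu_le.
elim: n x => [|n IHn] x Ix mux; case: (shrink x Ix) => [fx|mufx_lt].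
- by rewrite iter_fix.
- by have := leq_trans mufx_lt mux.
- by rewrite iter_fix.
rewrite iterSr; apply: IHn; first exact: (deff x Ix).1.
by rewrite -ltnS (leq_trans mufx_lt).
Qed.

Lemma iter_foldl_stable (X : eqType) (F : T -> X -> T) (s : seq X) n x
    (Q : T -> Prop) :
  (forall t, deflationary (F^~ t)) -> Inv x -> (mu x <= n)%N ->
  (forall y, Inv y -> (forall t, t \in s -> F y t = y) -> Q y) ->
  Q (iter n (fun x => foldl F x s) x).
Proof.
move=> defF Ix mux stableQ.
have [Iy fixy] := iter_deflationary_fixed (foldl_deflationary s defF) Ix mux.
by apply: stableQ => //; apply: foldl_fixed_step.
Qed.
End DeflationaryIteration.

Section SumMeasure.
Variables (I : finType) (T : I -> Type).
Variables (le : forall i, T i -> T i -> Prop) (mu : forall i, T i -> nat).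
Hypothesis mu_mono : forall i (x y : T i), le x y -> (mu x <= mu y)%N.
Hypothesis mu_inj : forall i (x y : T i), le x y -> (mu y <= mu x)%N -> x = y.

Lemma sum_measure_mono (f g : forall i, T i) :
  (forall i, le (f i) (g i)) -> (\sum_i mu (f i) <= \sum_i mu (g i))%N.
Proof. by move=> le_fg; apply: leq_sum => i _; apply: mu_mono. Qed.

Lemma sum_measure_inj (f g : forall i, T i) :
  (forall i, le (f i) (g i)) -> (\sum_i mu (g i) <= \sum_i mu (f i))%N -> f = g.
Proof.
move=> le_fg; rewrite -subn_eq0 -sumnB => [|i _]; last exact: mu_mono.
rewrite sum_nat_eq0 => /forallP eq_mu; apply: functional_extensionality_dep => i.
by apply: mu_inj => //; rewrite -subn_eq0 (eqP (eq_mu i)).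
Qed.
End SumMeasure.

Section DownSetCount.
Variables (d : Order.disp_t) (L : finPOrderType d).

Definition down_card (a : L) : nat := #|[pred y : L | y <= a]|.

Lemma down_card_mono (a b : L) : a <= b -> (down_card a <= down_card b)%N.
Proof.
move=> le_ab; apply/subset_leq_card/subsetP => y; rewrite !inE => le_ya.
exact: le_trans le_ya le_ab.
Qed.

Lemma down_card_inj (a b : L) : a <= b -> (down_card b <= down_card a)%N -> a = b.
Proof.
move=> le_ab le_card; have sub_ab : [pred y | y <= a] \subset [pred y | y <= b].
  by apply/subsetP => y; rewrite !inE => le_ya; exact: le_trans le_ya le_ab.
have /subset_cardP/(_ sub_ab) eq_ab : down_card a = down_card b.
  by apply/eqP; rewrite eqn_leq le_card down_card_mono.
have := eq_ab b; rewrite !inE lexx => le_ba.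
by apply/le_anti; rewrite le_ab le_ba.
Qed.
End DownSetCount.

Section AlgebraOrder.
Variable a : nalg.
Implicit Types x y : nalg_car a.

Lemma capAE x y : capA x y = x `&` y.
Proof. by rewrite /capA /cupA /negA complU !complK. Qed.

Lemma subAP x y : reflect (subA x y) (x <= y).
Proof. exact: join_idPr. Qed.

Lemma conv_mono : {homo @nalg_conv a : x y / x <= y}.
Proof. by move=> x y /join_idPr <-; rewrite nalg_convU leUl. Qed.

Lemma le_conv2 x y : (nalg_conv x <= nalg_conv y) = (x <= y).
Proof.
by apply/idP/idP => [/conv_mono|/conv_mono //]; rewrite !nalg_convK.
Qed.

Lemma conv_meet x y : nalg_conv (x `&` y) = nalg_conv x `&` nalg_conv y.
Proof.
apply/le_anti; rewrite lexI !conv_mono ?leIl ?leIr //=.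
rewrite -[_ `&` _]nalg_convK le_conv2 lexI.
by rewrite -{2}[x]nalg_convK -{3}[y]nalg_convK !le_conv2 leIl leIr.
Qed.

Lemma comp_mono x x' y y' :
  x <= x' -> y <= y' -> nalg_comp x y <= nalg_comp x' y'.
Proof.
have comp_monor (z : nalg_car a) : {homo nalg_comp z : u v / u <= v}.
  by move=> u v /join_idPr <-; rewrite nalg_compU leUl.
move=> le_x le_y; apply: le_trans (comp_monor x' _ _ le_y).
by rewrite -le_conv2 !nalg_convM comp_monor // le_conv2.
Qed.
End AlgebraOrder.

Section ProjectionClosure.
Variable M : multialg.
Local Notation m := (ma_m M).
Local Notation P := (ma_proj M).
Implicit Types R : mrel M.

Definition leR R R' := forall i, R i <= R' i.
Definition muR R : nat := \sum_i down_card (R i).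

Lemma leR_refl R : leR R R.
Proof. by move=> i. Qed.

Lemma leR_trans R1 R2 R3 : leR R1 R2 -> leR R2 R3 -> leR R1 R3.
Proof. by move=> le12 le23 i; apply: le_trans (le12 i) (le23 i). Qed.

Lemma muR_mono R R' : leR R R' -> (muR R <= muR R')%N.
Proof. exact: (sum_measure_mono (fun i => @down_card_mono _ _)). Qed.

Lemma muR_inj R R' : leR R R' -> (muR R' <= muR R)%N -> R = R'.
Proof.
exact: (sum_measure_inj (fun i => @down_card_mono _ _) (fun i => @down_card_inj _ _)).
Qed.

Lemma muR_bound R : (muR R <= ma_size M)%N.
Proof. by apply: leq_sum => i _; apply: max_card. Qed.

Lemma proj_step_le (i j : 'I_m) R : leR (proj_step i j R) R.
Proof. by move=> k; rewrite /proj_step; case: eqP => // _; rewrite capAE leIl. Qed.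

Lemma proj_step_fixed (i j : 'I_m) R :
  proj_step i j R = R -> subA (R j) (P i j (R i)).
Proof.
move=> fixR; apply/subAP; rewrite -[R j](congr1 (fun R' => R' j) fixR).
by rewrite /proj_step eqxx capAE leIr.
Qed.

Lemma proj_step_conv (i j : 'I_m) R :
  i != j -> proj_step i j (convR R) = convR (proj_step i j R).
Proof.
move=> ij; apply: functional_extensionality_dep => k; rewrite /proj_step /convR.
by case: eqP => // ->; rewrite !capAE (@ma_projC M i j ij) conv_meet.
Qed.

Lemma proj_closure_closed R : proj_closed (proj_closure R).
Proof.
apply: (iter_foldl_stable leR_refl leR_trans muR_mono muR_inj
  (Inv := fun _ => True)) => //.
- move=> [i j] R' _; split=> //.
  by case: ifP => _; [apply: proj_step_le | apply: leR_refl].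
- exact/leqW/muR_bound.
move=> R' _ stable i j ij; apply: proj_step_fixed.
by have := stable (i, j); rewrite mem_enum inE /= ij; apply.
Qed.

Lemma proj_round_conv R : proj_round (convR R) = convR (proj_round R).
Proof.
rewrite /proj_round; elim: (enum [set: 'I_m * 'I_m]) R => //= [[i j]] s IHs R.
by case: ifP => ij; rewrite ?proj_step_conv ?IHs.
Qed.

Lemma proj_closure_conv R : proj_closure (convR R) = convR (proj_closure R).
Proof.
by rewrite /proj_closure; elim: (ma_size M).+1 => //= n ->; rewrite proj_round_conv.
Qed.
End ProjectionClosure.

Section Distributivity.
Variables (M : multialg) (S : mrel M -> Prop).
Hypothesis distS : Rsh_distributive S.
Implicit Types R : mrel M.

Lemma slice_component R i : S R -> slice S (R i).
Proof. by exists R. Qed.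

Lemma proj_closed_convR R : proj_closed R -> proj_closed (convR R).
Proof.
move=> pcR i j ij; apply/subAP.
by rewrite /convR (@ma_projC M i j ij) le_conv2; apply/subAP/pcR.
Qed.

Lemma proj_closed_compR R1 R2 : S R1 -> S R2 -> proj_closed R1 -> proj_closed R2 ->
  (forall i, compR R1 R2 i <> emptyA _) -> proj_closed (compR R1 R2).
Proof.
move=> SR1 SR2 pcR1 pcR2 ne i j ij; apply/subAP.
have /subAP := (distS ij).1 _ _ (slice_component i SR1) (slice_component i SR2) (ne i).
by apply: le_trans; apply: comp_mono; apply/subAP; [apply: pcR1 | apply: pcR2].
Qed.

Lemma proj_closed_capR R1 R2 : S R1 -> S R2 -> proj_closed R1 -> proj_closed R2 ->
  (forall i, capR R1 R2 i <> emptyA _) -> proj_closed (capR R1 R2).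
Proof.
move=> SR1 SR2 pcR1 pcR2 ne i j ij; apply/subAP.
have /subAP := (distS ij).2 _ _ (slice_component i SR1) (slice_component i SR2) (ne i).
by apply: le_trans; rewrite /capR !capAE leI2 //; apply/subAP; [apply: pcR1 | apply: pcR2].
Qed.
End Distributivity.

Section Networks.
Variables (M : multialg) (S : mrel M -> Prop).
Hypotheses (subS : subclass S) (distS : Rsh_distributive S).
Variable V : finType.
Implicit Types N : V -> V -> mrel M.

Definition leN N' N := forall x y, leR (N' x y) (N x y).
Definition muN N : nat := \sum_x \sum_y muR (N x y).

Lemma leN_refl N : leN N N.
Proof. by move=> x y; apply: leR_refl. Qed.

Lemma leN_trans N1 N2 N3 : leN N1 N2 -> leN N2 N3 -> leN N1 N3.
Proof. by move=> le12 le23 x y; apply: leR_trans (le12 x y) (le23 x y). Qed.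

Lemma sum_muR_mono (n n' : V -> mrel M) :
  (forall y, leR (n y) (n' y)) -> (\sum_y muR (n y) <= \sum_y muR (n' y))%N.
Proof. exact: (sum_measure_mono (mu := fun=> @muR M) (fun=> @muR_mono M)). Qed.

Lemma sum_muR_inj (n n' : V -> mrel M) :
  (forall y, leR (n y) (n' y)) -> (\sum_y muR (n' y) <= \sum_y muR (n y))%N -> n = n'.
Proof.
exact: (sum_measure_inj (mu := fun=> @muR M) (fun=> @muR_mono M) (fun=> @muR_inj M)).
Qed.

Lemma muN_mono N N' : leN N N' -> (muN N <= muN N')%N.
Proof.
exact: (sum_measure_mono (mu := fun _ n => \sum_y muR (n y)) (fun x => @sum_muR_mono)).
Qed.

Lemma muN_inj N N' : leN N N' -> (muN N' <= muN N)%N -> N = N'.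
Proof.
exact: (sum_measure_inj (mu := fun _ n => \sum_y muR (n y))
  (fun x => @sum_muR_mono) (fun x => @sum_muR_inj)).
Qed.

Lemma muN_bound N : (muN N <= #|V| * #|V| * ma_size M)%N.
Proof.
rewrite -mulnA -sum_nat_const; apply: leq_sum => x _.
by rewrite -sum_nat_const; apply: leq_sum => y _; apply: muR_bound.
Qed.

Definition conv_symmetric N :=
  forall x y, x != y -> forall i, N y x i = nalg_conv (N x y i).

Lemma triv_incons_le N' N : leN N' N -> triv_incons N -> triv_incons N'.
Proof.
move=> le_N [x [y [xy [i Ni]]]]; exists x, y; split=> //; exists i.
by apply/eqP; rewrite -lex0 -[\bot]Ni le_N.
Qed.

Section CompositionStep.
Variables (x y z : V) (N : V -> V -> mrel M).
Hypotheses (xy : x != y) (yz : y != z) (xz : x != z).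
Local Notation nxz := (capR (N x z) (compR (N x y) (N y z))).
Local Notation N' := (comp_step x y z N).

Lemma comp_step_elim (Q : V -> V -> mrel M -> Prop) :
  Q x z nxz -> Q z x (convR nxz) -> (forall u v, Q u v (N u v)) ->
  forall u v, Q u v (N' u v).
Proof.
move=> Qxz Qzx QN u v; rewrite /comp_step.
by do 2![case: andP => [[/eqP-> /eqP->] //|_]].
Qed.

Lemma comp_step_le : conv_symmetric N -> leN N' N.
Proof.
move=> symN; apply: (comp_step_elim (Q := fun u v R => leR R (N u v))).
- by move=> i; rewrite /capR capAE leIl.
- by move=> i; rewrite /convR symN // /capR capAE le_conv2 leIl.
- by move=> u v; apply: leR_refl.
Qed.

Lemma comp_step_conv_symmetric : conv_symmetric N -> conv_symmetric N'.
Proof.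
move=> symN u v uv i; have zx : z != x by rewrite eq_sym.
rewrite /comp_step /convR.
case: (eqVneq u x) uv => [->|ux]; last case: (eqVneq u z) => [->|uz]; move=> uv.
- by case: (eqVneq v z) => [->|vz]; rewrite ?(negbTE xz) ?(negbTE zx) ?andbF //= symN.
- by case: (eqVneq v x) => [->|vx]; rewrite /= ?andbF ?nalg_convK //= symN.
- by rewrite !andbF /= symN.
Qed.

Lemma comp_step_fixed : N' = N -> subR (N x z) (compR (N x y) (N y z)).
Proof.
move=> fixN i; apply/subAP; rewrite -[N x z](congr1 (fun N => N x z) fixN).
by rewrite /comp_step !eqxx /= /capR capAE leIr.
Qed.

Lemma comp_step_network_over : network_over S N -> network_over S N'.
Proof.
case: subS => [compS [capS convS]] [SN symN]; split; last first.
  exact: comp_step_conv_symmetric.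
apply: (comp_step_elim (Q := fun u v R => u != v -> S R)) => [_|_|u v /SN //].
  by apply: capS; [|apply: compS]; apply: SN.
by apply: convS; apply: capS; [|apply: compS]; apply: SN.
Qed.

Lemma comp_step_proj_closed : network_over S N -> net_proj_closed N ->
  (forall i, nxz i <> emptyA _) -> net_proj_closed N'.
Proof.
case: subS => [compS _] [SN _] pcN nonempty.
have nonempty_comp i : compR (N x y) (N y z) i <> emptyA _.
  move=> empty; apply: (nonempty i); apply/eqP.
  by rewrite -lex0 -[\bot]empty /capR capAE leIr.
have S_comp := compS _ _ (SN _ _ xy) (SN _ _ yz).
have pc_comp := proj_closed_compR distS (SN _ _ xy) (SN _ _ yz) (pcN _ _ xy) (pcN _ _ yz)
  nonempty_comp.
have pc_nxz := proj_closed_capR distS (SN _ _ xz) S_comp (pcN _ _ xz) pc_comp nonempty.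
apply: (comp_step_elim (Q := fun u v R => u != v -> proj_closed R)) => [_ //|_|u v /pcN //].
exact: proj_closed_convR.
Qed.
End CompositionStep.

Definition closure_invariant N :=
  network_over S N /\ (triv_incons N \/ net_proj_closed N).

Lemma comp_step_deflationary (x y z : V) : x != y -> y != z -> x != z ->
  deflationary leN closure_invariant (comp_step x y z).
Proof.
move=> xy yz xz N [overN incN]; have le_N := comp_step_le y xz overN.2.
split=> //; split; first exact: comp_step_network_over.
case: incN => [incN|pcN]; first by left; apply: triv_incons_le le_N incN.
have [[i empty]|nonempty] :=
  classic (exists i, capR (N x z) (compR (N x y) (N y z)) i = emptyA _).
  by left; exists x, z; split=> //; exists i; rewrite /comp_step !eqxx.
by right; apply: comp_step_proj_closed => // i empty; apply: nonempty; exists i.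
Qed.

Lemma comp_closure_dissociable N : closure_invariant N ->
  alg_consistent (comp_closure N) \/ triv_incons (comp_closure N).
Proof.
move=> invN; apply: (iter_foldl_stable leN_refl leN_trans muN_mono muN_inj
  (Inv := closure_invariant) (Q := fun N => alg_consistent N \/ triv_incons N)) => //.
- move=> [[x y] z] N' invN'; case: ifP => [/and3P[xy yz xz]|_].
    exact: comp_step_deflationary.
  by split=> //; apply: leN_refl.
- exact/leqW/muN_bound.
move=> N' [_ incN'] stable; have [|consN'] := classic (triv_incons N'); first by right.
left; split; last by split=> //; case: incN'.
move=> x y z xy yz xz; apply: comp_step_fixed.
by have := stable (x, y, z); rewrite mem_enum inE xy yz xz; apply.
Qed.
End Networks.

Theorem proposition6p9 (M : multialg) (S : mrel M -> Prop) :
  subclass S -> Rsh_closed S -> Rsh_distributive S -> dissociable S.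
Proof.
move=> subS closedS distS V N [SN symN].
apply: (comp_closure_dissociable subS distS); split; last first.
  by right=> x y _; apply: proj_closure_closed.
split=> [x y xy|x y xy i]; first exact/closedS/SN.
have -> : N y x = convR (N x y) by apply: functional_extensionality_dep; apply: symN.
by rewrite proj_closure_conv.
Qed.
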